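(* Let $w_1,\dots,w_n$ be positive integers with $\sum_{i\in[n]}w_i=3t+1$ for some integer $t$, and let $g$ be a positive integer such that the adjustment $f_g$ is $t$-bounded for $(w_1,\dots,w_n)$. Set $d_i=f_g(w_i)/g$ for $i\in[n]$. Then for every partition $(A,B)$ of $[n]$ (i.e. $A\cup B=[n]$, $A\cap B=\emptyset$) with $\sum_{i\in A}w_i>2\sum_{i\in B}w_i$, it holds that $\sum_{i\in A}d_i>\sum_{i\in B}d_i$; that is, $(w_1,\dots,w_n)\mapsto(d_1,\dots,d_n)$ is a qualified allocation.
   Context: For a positive integer $g$, the adjustment $f_g$ maps a positive integer $w$ to $w-(w\bmod g)$ if $w\bmod g<g/2$, and to $w+g-(w\bmod g)$ otherwise; thus $f_g(w)$ is a non-negative multiple of $g$. The adjustment $f_g$ is called $t$-bounded for $(w_1,\dots,w_n)$ if $\sum_{i\in[n]}|w_i-f_g(w_i)|\le t$. A map sending $(w_1,\dots,w_n)$ to non-negative integers $(d_1,\dots,d_n)$ is a qualified allocation if for every partition $(A,B)$ of $[n]$ with $\sum_{i\in A}w_i>2\sum_{i\in B}w_i$ one has $\sum_{i\in A}d_i>\sum_{i\in B}d_i$. *)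

From mathcomp Require Import all_boot.
Set Implicit Arguments. Unset Strict Implicit. Unset Printing Implicit Defensive.

(* The adjustment f_g: rounds w to a multiple of g.
   "w mod g < g/2" (rational comparison) is written as 2 * (w %% g) < g. *)
Definition adjust (g w : nat) : nat :=
  if 2 * (w %% g) < g then w - w %% g else w + g - w %% g.

Definition t_bounded (n : nat) (g t : nat) (w : 'I_n -> nat) : Prop :=
  \sum_(i < n) (maxn (w i) (adjust g (w i)) - minn (w i) (adjust g (w i))) <= t.

Definition qualified_allocation (n : nat) (w d : 'I_n -> nat) : Prop :=
  forall A B : {set 'I_n}, A :|: B = [set: 'I_n] -> A :&: B = set0 ->
    \sum_(i in A) w i > 2 * \sum_(i in B) w i ->
    \sum_(i in A) d i > \sum_(i in B) d i.

From mathcomp Require Import all_boot.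
From mathcomp Require Import zify.

(* The rounding errors |w_i - f_g(w_i)| total at most t, while the majority
   condition forces sum_A w - sum_B w > t (as sum_B w <= t < 2t + 1 <= sum_A w),
   so rounding cannot close the gap: sum_A f_g(w) > sum_B f_g(w).  Every
   f_g(w_i) is a multiple of g, so dividing by g preserves the strict inequality. *)

Lemma dvdn_adjust g w : g %| adjust g w.
Proof.
rewrite /adjust; case: ifP => _; rewrite {1}(divn_eq w g).
- by rewrite addnK dvdn_mull.
- by rewrite addnAC addnK dvdn_add ?dvdn_mull.
Qed.

Lemma sum_partition {T : finType} {A B : {set T}} (F : T -> nat) :
  A :|: B = [set: T] -> A :&: B = set0 ->
  \sum_i F i = \sum_(i in A) F i + \sum_(i in B) F i.
Proof.
move=> cover disj; rewrite -bigU; last by rewrite -setI_eq0 disj.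
by apply: eq_bigl => i; rewrite inE -in_setU cover inE.
Qed.

Lemma leq_sum_add_dist {I : finType} (A : {pred I}) (x y : I -> nat) :
  \sum_(i in A) x i <=
  \sum_(i in A) y i + \sum_(i in A) (maxn (x i) (y i) - minn (x i) (y i)).
Proof. by rewrite -big_split; apply: leq_sum => i _ /=; lia. Qed.

Lemma majority_gap a b t : a + b = 3 * t + 1 -> 2 * b < a -> b + t < a.
Proof. lia. Qed.

Lemma ltn_sum_divn {I : finType} (A B : {pred I}) (F : I -> nat) d :
  0 < d -> (forall i, d %| F i) ->
  \sum_(i in B) F i < \sum_(i in A) F i ->
  \sum_(i in B) F i %/ d < \sum_(i in A) F i %/ d.
Proof.
move=> d_gt0 dvdF lt_sum; rewrite -(ltn_pmul2r d_gt0) !big_distrl /=.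
under eq_bigr do rewrite divnK //.
under [in X in _ < X]eq_bigr do rewrite divnK //.
exact: lt_sum.
Qed.

Theorem mainTheorem3 (n : nat) (w : 'I_n -> nat) (t g : nat) :
  (forall i, 0 < w i) ->
  \sum_(i < n) w i = 3 * t + 1 ->
  0 < g ->
  t_bounded g t w ->
  qualified_allocation w (fun i => adjust g (w i) %/ g).
Proof.
move=> _ sum_w g_gt0 bounded A B cover disj maj.
apply: ltn_sum_divn => // [i|]; first exact: dvdn_adjust.
set e := fun i => maxn (w i) (adjust g (w i)) - minn (w i) (adjust g (w i)).
have gap : \sum_(i in B) w i + t < \sum_(i in A) w i.
  by apply: majority_gap maj; rewrite -sum_w (sum_partition w cover disj).
have err : \sum_(i in A) e i + \sum_(i in B) e i <= t.
  by rewrite -(sum_partition e cover disj); exact: bounded.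
have errA : \sum_(i in A) w i <=
    \sum_(i in A) adjust g (w i) + \sum_(i in A) e i := leq_sum_add_dist A _ _.
have errB : \sum_(i in B) adjust g (w i) <=
    \sum_(i in B) w i + \sum_(i in B) e i.
  under [X in _ <= _ + X]eq_bigr do rewrite /e maxnC minnC.
  exact: leq_sum_add_dist.
lia.
Qed.
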